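(* Let $R$ be a commutative ring with identity. If $\gamma_t(\Gamma(R)) = 2$ and $R$ is not isomorphic to $\mathbb{Z}_2\times D$ for any integral domain $D$, then $\gamma_t(\Gamma(R)) = \gamma(\Gamma(R))$.
   Context: All rings are commutative with identity. $Z(R)^*$ is the set of nonzero zero-divisors. The zero-divisor graph $\Gamma(R)$ has vertex set $Z(R)^*$; distinct $r,s$ are adjacent iff $rs=0$, and $x$ is adjacent to itself iff $x^2=0$. A dominating set is $X\subseteq Z(R)^*$ such that every vertex not in $X$ is adjacent to some element of $X$; a total dominating set is $X$ such that every vertex (including those in $X$) is adjacent to some element of $X$ (self-adjacency counts). $\gamma$ and $\gamma_t$ denote the respective minimum cardinalities. *)

From HB Require Import structures.
From mathcomp Require Import all_boot all_order all_algebra.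
Set Implicit Arguments. Unset Strict Implicit. Unset Printing Implicit Defensive.
Import GRing.Theory.
Local Open Scope ring_scope.

Section ZeroDivisorGraph.
Variable R : comPzRingType.

Definition zdiv_star (x : R) : Prop :=
  x != 0 /\ exists y : R, y != 0 /\ x * y = 0.

(* Adjacency in Gamma(R) between vertices x, y (distinct: xy = 0;
   equal: x^2 = 0 -- both cases are x * y = 0). *)
Definition zd_adj (x y : R) : Prop := x * y = 0.

Definition zd_dominating (X : R -> Prop) : Prop :=
  (forall x, X x -> zdiv_star x) /\
  (forall v, zdiv_star v -> ~ X v -> exists x, X x /\ zd_adj v x).

(* Total dominating set of Gamma(R) (self-adjacency counts). *)
Definition zd_total_dominating (X : R -> Prop) : Prop :=
  (forall x, X x -> zdiv_star x) /\
  (forall v, zdiv_star v -> exists x, X x /\ zd_adj v x).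

(* The minimum cardinality of a set satisfying P equals n:
   some n-element set satisfies P, and every set satisfying P has at least
   n elements (sets with fewer than n elements are finite, hence given by a
   sequence). *)
Definition min_card_is (P : (R -> Prop) -> Prop) (n : nat) : Prop :=
  (exists s : seq R, uniq s /\ size s = n /\ P (fun x => x \in s)) /\
  (forall s : seq R, P (fun x => x \in s) -> (n <= size (undup s))%N).

Definition gamma_is (n : nat) : Prop := min_card_is zd_dominating n.
Definition gamma_t_is (n : nat) : Prop := min_card_is zd_total_dominating n.

End ZeroDivisorGraph.

From HB Require Import structures.
From mathcomp Require Import all_boot all_order all_algebra.
From Stdlib Require Import ClassicalEpsilon.
Set Implicit Arguments. Unset Strict Implicit. Unset Printing Implicit Defensive.
Import GRing.Theory.
Local Open Scope ring_scope.

(* A total dominating set is dominating, so gamma <= gamma_t = 2; the point is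
   to rule out a dominating set {y}.  If y^2 = 0 then {y} is even total
   dominating, contradicting gamma_t = 2.  Otherwise y is adjacent to every
   other vertex but not to itself; this forces y to be an idempotent with
   yR = {0, y} and Ann(y) = (1 - y)R an integral domain, so that
   R = yR x (1 - y)R is isomorphic to Z_2 x Ann(y). *)

Section Domination.
Variable R : comPzRingType.

Lemma zd_total_dominating_dominating (X : R -> Prop) :
  zd_total_dominating X -> zd_dominating X.
Proof. by move=> [X_vertex X_dom]; split=> // v v_vertex _; exact: X_dom. Qed.

Lemma zd_dominating_seq_inhabited (s : seq R) (v : R) :
  zd_dominating (fun x => x \in s) -> zdiv_star v -> exists x, x \in s.
Proof.
case: s => [|x s] [_ s_dom] v_vertex; last by exists x; exact: mem_head.
by have [x []] := s_dom v v_vertex notF.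
Qed.

Definition zd_dominating_vertex (y : R) : Prop :=
  zdiv_star y /\ forall v, zdiv_star v -> v != y -> v * y = 0.

Lemma zd_dominating_singleton (X : R -> Prop) (y : R) :
  (forall x, X x <-> x = y) -> zd_dominating X -> zd_dominating_vertex y.
Proof.
move=> X_y [X_vertex X_dom]; split; first exact/X_vertex/X_y.
move=> v v_vertex v_ne_y.
have v_notin : ~ X v by move/X_y/eqP; exact/negP.
by have [x [/X_y <-]] := X_dom v v_vertex v_notin.
Qed.

Lemma zd_total_dominating_singleton (X : R -> Prop) (y : R) :
  (forall x, X x <-> x = y) -> zd_dominating_vertex y -> y * y = 0 ->
  zd_total_dominating X.
Proof.
move=> X_y [y_vertex y_dom] yy0; split=> [x /X_y -> //|v v_vertex].
exists y; split; first exact/X_y.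
by have [->|] := eqVneq v y; last exact: y_dom.
Qed.

End Domination.

Record z2_split_idempotent (R : comPzRingType) (e : R) : Prop := Z2SplitIdempotent {
  split_idem : e * e = e;
  split_neq0 : e != 0;
  split_compl_neq0 : 1 - e != 0;
  split_mul_dichotomy : forall r, r * e = 0 \/ r * e = e;
  split_ann_domain :
    forall a b, a * e = 0 -> b * e = 0 -> a * b = 0 -> a = 0 \/ b = 0 }.

Section DominatingVertex.
Variables (R : comPzRingType) (y : R).
Hypotheses (y_dom : zd_dominating_vertex y) (yy_neq0 : y * y != 0).

Lemma dominating_vertex_eq (v : R) : zdiv_star v -> v * y != 0 -> v = y.
Proof.
move=> v_vertex; apply: contraNeq => v_ne_y.
by apply/eqP; exact: y_dom.2.
Qed.

Lemma dominating_vertex_idem : y * y = y.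
Proof.
have [y_neq0 [z [z_neq0 yz0]]] := y_dom.1.
have [//|yy_ne_y] := eqVneq (y * y) y; exfalso.
have yy_vertex : zdiv_star (y * y).
  by split=> //; exists z; rewrite -mulrA yz0 mulr0.
have y3 : y * y * y = 0.
  apply/eqP; apply: contraNT yy_ne_y => y3_neq0.
  by apply/eqP; exact: dominating_vertex_eq.
(* y + y^2 acts on y as y^2 does, yet is annihilated by y^2 *)
have yyy_y : (y + y * y) * y = y * y by rewrite mulrDl y3 addr0.
have yyy_vertex : zdiv_star (y + y * y).
  split; first by apply: contra_neq yy_neq0 => yyy0; rewrite -yyy_y yyy0 mul0r.
  exists (y * y); split=> //.
  by rewrite mulrDl mulrA y3 [y * y * _]mulrA y3 mul0r addr0.
have yyy_y_neq0 : (y + y * y) * y != 0 by rewrite yyy_y.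
have /eqP := dominating_vertex_eq yyy_vertex yyy_y_neq0.
by rewrite -subr_eq0 addrAC subrr add0r (negbTE yy_neq0).
Qed.

Lemma dominating_vertex_compl_neq0 : 1 - y != 0.
Proof.
have [_ [z [z_neq0 yz0]]] := y_dom.1.
by rewrite subr_eq0; apply: contra_neq z_neq0 => y1; rewrite -yz0 -y1 mul1r.
Qed.

Lemma dominating_vertex_mul_dichotomy (r : R) : r * y = 0 \/ r * y = y.
Proof.
have [ry0|ry_neq0] := eqVneq (r * y) 0; [by left | right].
apply: dominating_vertex_eq; last by rewrite -mulrA dominating_vertex_idem.
split=> //; exists (1 - y); split; first exact: dominating_vertex_compl_neq0.
by rewrite -mulrA mulrBr mulr1 dominating_vertex_idem subrr mulr0.
Qed.

Lemma dominating_vertex_ann_domain (a b : R) :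
  a * y = 0 -> b * y = 0 -> a * b = 0 -> a = 0 \/ b = 0.
Proof.
move=> ay0 by0 ab0; have [a0|a_neq0] := eqVneq a 0; [by left | right].
apply/eqP; apply: contraNT a_neq0 => b_neq0.
have ay_y : (a + y) * y = y by rewrite mulrDl ay0 add0r dominating_vertex_idem.
have ay_vertex : zdiv_star (a + y).
  split; first by apply: contra_neq y_dom.1.1 => ay0'; rewrite -ay_y ay0' mul0r.
  by exists b; rewrite mulrDl ab0 add0r mulrC.
have ay_y_neq0 : (a + y) * y != 0 by rewrite ay_y; exact: y_dom.1.1.
have := dominating_vertex_eq ay_vertex ay_y_neq0.
by move/(canRL (addrK y)); rewrite subrr => ->.
Qed.

Lemma dominating_vertex_split : z2_split_idempotent y.
Proof.
split; [exact: dominating_vertex_idem | exact: y_dom.1.1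
  | exact: dominating_vertex_compl_neq0 | exact: dominating_vertex_mul_dichotomy
  | exact: dominating_vertex_ann_domain].
Qed.

End DominatingVertex.

Section SplitFactor.
Variables (R : comPzRingType) (e : R) (He : z2_split_idempotent e).

Definition annihilator : pred R := [pred r | r * e == 0].

Lemma annihilator_zmod_closed : zmod_closed annihilator.
Proof. by split=> [|a b /eqP ae /eqP be]; rewrite inE ?mul0r // mulrBl ae be subr0. Qed.
HB.instance Definition _ := GRing.isZmodClosed.Build R annihilator
  annihilator_zmod_closed.

(* The ideal (1 - e)R = Ann(e), a ring with identity 1 - e; indexing the type
   by the proof [He] lets the ring structures below be canonical. *)
Definition split_factor of z2_split_idempotent e := {r : R | r \in annihilator}.
Local Notation D := (split_factor He).

HB.instance Definition _ := [isSub for @sval R annihilator : D -> R].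
HB.instance Definition _ := [Choice of D by <:].
HB.instance Definition _ := [SubChoice_isSubZmodule of D by <:].

Lemma annihilator_mul (a : D) : val a * e = 0.
Proof. by apply/eqP; have := valP a; rewrite inE. Qed.

Lemma compl_annihilator : (1 - e) * e = 0.
Proof. by rewrite mulrBl mul1r (split_idem He) subrr. Qed.

Lemma compl_idem : (1 - e) * (1 - e) = 1 - e.
Proof. by rewrite mulrBr mulr1 compl_annihilator subr0. Qed.

Lemma annihilator_mulr (r : R) (a : D) : r * val a \in annihilator.
Proof. by rewrite inE -mulrA annihilator_mul mulr0. Qed.

Definition factor_one : D := Sub (1 - e) (introT eqP compl_annihilator).
Definition factor_mul (a b : D) : D := Sub (val a * val b) (annihilator_mulr _ b).

Lemma factor_mulA : associative factor_mul.
Proof. by move=> a b c; apply: val_inj; rewrite !SubK mulrA. Qed.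

Lemma factor_mulC : commutative factor_mul.
Proof. by move=> a b; apply: val_inj; rewrite !SubK mulrC. Qed.

Lemma factor_mul1 : left_id factor_one factor_mul.
Proof.
by move=> a; apply: val_inj; rewrite !SubK mulrBl mul1r mulrC annihilator_mul subr0.
Qed.

Lemma factor_mulDl : left_distributive factor_mul +%R.
Proof. by move=> a b c; apply: val_inj; rewrite /= mulrDl. Qed.

Lemma factor_one_neq0 : factor_one != 0.
Proof. by rewrite -(inj_eq val_inj) SubK (split_compl_neq0 He). Qed.

HB.instance Definition _ := GRing.Zmodule_isComNzRing.Build D
  factor_mulA factor_mulC factor_mul1 factor_mulDl factor_one_neq0.

Definition factor_unit : pred D := fun a =>
  if excluded_middle_informative (exists b : D, b * a == 1) then true else false.

Definition factor_inv (a : D) : D :=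
  if excluded_middle_informative (exists b : D, b * a == 1) is left has_inv
  then xchoose has_inv else a.

Lemma factor_mulVr : {in factor_unit, left_inverse 1 factor_inv *%R}.
Proof.
move=> a; rewrite unfold_in /factor_unit /factor_inv.
by case: excluded_middle_informative => // has_inv _; exact/eqP/(xchooseP has_inv).
Qed.

Lemma factor_unitPl (a b : D) : b * a = 1 -> factor_unit a.
Proof.
move=> ba1; rewrite /factor_unit.
by case: excluded_middle_informative => // -[]; exists b; apply/eqP.
Qed.

Lemma factor_inv_out : {in [predC factor_unit], factor_inv =1 id}.
Proof.
move=> a; rewrite inE /= unfold_in /factor_unit /factor_inv.
by case: excluded_middle_informative.
Qed.

HB.instance Definition _ := GRing.ComNzRing_hasMulInverse.Build D
  factor_mulVr factor_unitPl factor_inv_out.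

Lemma factor_integral : GRing.integral_domain_axiom D.
Proof.
move=> a b /(congr1 val) /= ab0; apply/orP.
have [a0|b0] := split_ann_domain He (annihilator_mul a) (annihilator_mul b) ab0;
  [left | right]; exact/eqP/val_inj.
Qed.

HB.instance Definition _ := GRing.ComUnitRing_isIntegral.Build D factor_integral.

(* The coordinate of r in eR = {0, e} = Z_2. *)
Definition split_bit (r : R) : 'Z_2 := (r * e != 0)%:R.

Definition split_map (r : R) : 'Z_2 * D :=
  (split_bit r, Sub (r * (1 - e)) (annihilator_mulr r factor_one)).

Lemma split_bit_is_zmod_morphism : zmod_morphism split_bit.
Proof.
move=> a b; rewrite /split_bit mulrBl.
have e_neq0 := split_neq0 He.
have [] := split_mul_dichotomy He a => ->; have [] := split_mul_dichotomy He b => ->;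
  rewrite ?subrr ?subr0 ?sub0r ?oppr_eq0 ?eqxx ?(negbTE e_neq0); exact/eqP.
Qed.

Lemma split_map_is_zmod_morphism : zmod_morphism split_map.
Proof.
move=> a b; congr (_, _); first exact: split_bit_is_zmod_morphism.
by apply: val_inj; rewrite /= mulrBl.
Qed.

Lemma split_map_is_monoid_morphism : monoid_morphism split_map.
Proof.
split.
  congr (_, _); first by rewrite /split_bit mul1r (split_neq0 He).
  by apply: val_inj; rewrite /= mul1r.
move=> a b; congr (_, _).
  rewrite /= /split_bit -mulrA; have [] := split_mul_dichotomy He b => ->.
    by rewrite mulr0 eqxx mulr0.
  by rewrite (split_neq0 He) mulr1.
by apply: val_inj; rewrite /= mulrACA compl_idem.
Qed.

HB.instance Definition _ := GRing.isZmodMorphism.Build R ('Z_2 * D)%type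
  split_map split_map_is_zmod_morphism.
HB.instance Definition _ := GRing.isMonoidMorphism.Build R ('Z_2 * D)%type
  split_map split_map_is_monoid_morphism.

Lemma split_map_bij : bijective split_map.
Proof.
exists (fun p : 'Z_2 * D => e *+ p.1 + val p.2).
  move=> r; rewrite /split_map /split_bit /= mulrBr mulr1.
  have [] := split_mul_dichotomy He r => ->.
    by rewrite eqxx add0r subr0.
  by rewrite (split_neq0 He) addrC subrK.
move=> [[[|[|k]] k_lt2] a] //=; congr (_, _).
- by apply: val_inj; rewrite /split_bit /= add0r annihilator_mul eqxx.
- by apply: val_inj; rewrite /= add0r mulrBr mulr1 annihilator_mul subr0.
- apply: val_inj; rewrite /split_bit /= mulrDl annihilator_mul addr0.
  by rewrite (split_idem He) (split_neq0 He).
- apply: val_inj; rewrite /= mulrDl mulrBr mulr1 (split_idem He) subrr add0r.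
  by rewrite mulrBr mulr1 annihilator_mul subr0.
Qed.

End SplitFactor.

Lemma z2_split_idempotent_iso (R : comPzRingType) (e : R) :
  z2_split_idempotent e ->
  exists (D : idomainType) (f : {rmorphism R -> ('Z_2 * D)%type}), bijective f.
Proof. by move=> He; exists (split_factor He), (split_map He); exact: split_map_bij. Qed.

Theorem proposition3p3 (R : comPzRingType) :
  gamma_t_is R 2 ->
  ~ (exists (D : idomainType) (f : {rmorphism R -> ('Z_2 * D)%type}), bijective f) ->
  gamma_is R 2.
Proof.
move=> [[st [st_uniq [st_size st_tdom]]] gamma_t_min] not_iso.
split; first by exists st; split=> //; split=> //; exact: zd_total_dominating_dominating.
have [v v_vertex] : exists v : R, zdiv_star v.
  case: st st_size st_tdom {st_uniq} => // v ? _ [st_vertex _].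
  by exists v; exact/st_vertex/mem_head.
move=> s s_dom; rewrite leqNgt; apply/negP.
case s_y: (undup s) => [|y [|//]] // _.
  have [x] := zd_dominating_seq_inhabited s_dom v_vertex.
  by rewrite -mem_undup s_y.
have s_eq_y x : x \in s <-> x = y by rewrite -mem_undup s_y inE; split=> /eqP.
have y_dom := zd_dominating_singleton s_eq_y s_dom.
have [yy0|yy_neq0] := eqVneq (y * y) 0.
  by have := gamma_t_min s (zd_total_dominating_singleton s_eq_y y_dom yy0); rewrite s_y.
exact/not_iso/z2_split_idempotent_iso/(dominating_vertex_split y_dom yy_neq0).
Qed.
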